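(* Let $P$ be a poset with an $\mathbb{R}$-action $\Lambda$. Let $I,J$ be intervals of $P$ and $\epsilon\ge0$ with $I\subseteq\mathrm{Ex}^\Lambda_\epsilon(J)$ and $J\subseteq\mathrm{Ex}^\Lambda_\epsilon(I)$. Then the interval modules $k_I$ and $k_J$ are $\Lambda_\epsilon$-interleaved.
   Context: Let $k$ be a field. A $P$-persistence module $V$ is a functor from the poset $P$ (as a category) to $k$-vector spaces, with spaces $V_p$ and maps $V(p,q)$ for $p\le q$; morphisms are natural transformations. An interval of $P$ is a nonempty convex and connected subset (convex: $p,q\in I$, $p\le r\le q$ imply $r\in I$; connected: any two elements are joined by a finite sequence in $I$ with consecutive ones comparable). The interval module $k_I$ is $k$ on $I$ and $0$ elsewhere, with identity maps within $I$ and zero maps otherwise. For $A\subseteq P$ nonempty, $A^\uparrow=\{p:\exists a\in A,\ a\le p\}$ and $A^\downarrow=\{p:\exists a\in A,\ p\le a\}$; $\emptyset^\uparrow=\emptyset^\downarrow=P$. An $\mathbb{R}$-action on $P$ is a family $\{\Lambda_\epsilon\}_{\epsilon\ge0}$ of poset automorphisms with $p\le\Lambda_\epsilon(p)$, $\Lambda_0=\mathrm{id}$ and $\Lambda_\epsilon\Lambda_\zeta=\Lambda_{\epsilon+\zeta}$. $\mathrm{Ex}^\Lambda_\epsilon(A)=\Lambda_\epsilon^{-1}(A)^\uparrow\cap\Lambda_\epsilon(A)^\downarrow$, with $\Lambda_\epsilon^{-1}(A)$ the preimage. Shifts and interleavings: - $V(\epsilon)_p=V_{\Lambda_\epsilon(p)}$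 and $V(\epsilon)(p,q)=V(\Lambda_\epsilon p,\Lambda_\epsilon q)$; - for a morphism $\phi$, $\phi(\epsilon)$ has components $\phi_{\Lambda_\epsilon(p)}$; - $V_{0\to\epsilon}\colon V\to V(\epsilon)$ has components $V(p,\Lambda_\epsilon p)$; - $V$ and $W$ are $\Lambda_\epsilon$-interleaved if there exist $\alpha\colon V\to W(\epsilon)$ and $\beta\colon W\to V(\epsilon)$ with $\beta(\epsilon)\alpha=V_{0\to2\epsilon}$ and $\alpha(\epsilon)\beta=W_{0\to2\epsilon}$. *)

From HB Require Import structures.
From mathcomp Require Import all_boot all_order all_algebra.
From mathcomp Require Import boolp classical_sets reals.
Set Implicit Arguments. Unset Strict Implicit. Unset Printing Implicit Defensive.
Import Order.TTheory GRing.Theory Num.Theory.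
Local Open Scope classical_set_scope.
Local Open Scope order_scope.

Section Defs.
Context {disp : Order.disp_t} (P : porderType disp).

Definition convex_set (I : set P) : Prop :=
  forall p q r, I p -> I q -> p <= r -> r <= q -> I r.

Definition connected_set (I : set P) : Prop :=
  forall p q, I p -> I q ->
    exists s : seq P, [/\ all (fun x => x \in I) s,
                         path (fun x y => x >=< y) p s & last p s = q].

Definition is_interval (I : set P) : Prop :=
  I !=set0 /\ convex_set I /\ connected_set I.

(* Up-set and down-set, with the convention emptyset^up = emptyset^down = P *)
Definition upset (A : set P) : set P :=
  if asbool (A = set0) then setT else [set p | exists2 a, A a & a <= p].
Definition downset (A : set P) : set P :=
  if asbool (A = set0) then setT else [set p | exists2 a, A a & p <= a].

(* The family is given as a function on all of R; only e >= 0 is constrained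
   and used. *)
Record Raction (R : realType) := {
  act :> R -> P -> P;
  act_mono : forall (e : R) p q, (0 <= e)%R -> (act e p <= act e q) = (p <= q);
  act_bij : forall (e : R), (0 <= e)%R -> bijective (act e);
  act_incr : forall (e : R) p, (0 <= e)%R -> p <= act e p;
  act0 : forall p, act 0%R p = p;
  actD : forall (e z : R) p, (0 <= e)%R -> (0 <= z)%R ->
           act e (act z p) = act (e + z)%R p }.

Definition Ex (R : realType) (L : Raction R) (e : R) (A : set P) : set P :=
  upset (L e @^-1` A) `&` downset (L e @` A).

Record pmod (k : fieldType) := {
  pm_sp : P -> lmodType k;
  pm_map : forall p q : P, p <= q -> {linear pm_sp p -> pm_sp q} }.

Definition is_functor (k : fieldType) (V : pmod k) : Prop :=
  (forall p (h : p <= p) v, pm_map V h v = v) /\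
  (forall p q r (h1 : p <= q) (h2 : q <= r) (h3 : p <= r) v,
      pm_map V h3 v = pm_map V h2 (pm_map V h1 v)).

(* Interval module k_I: k on I (as 'rV[k]_1), 0 elsewhere (as 'rV[k]_0),
   identity maps inside I and zero maps otherwise. *)
Definition imod_dim (I : set P) (p : P) : nat := nat_of_bool (p \in I).

Definition imod_mx (k : fieldType) (I : set P) (p q : P) :
  'M[k]_(imod_dim I p, imod_dim I q) :=
  const_mx (if (p \in I) && (q \in I) then 1%R else 0%R).

Definition interval_module (k : fieldType) (I : set P) : pmod k :=
  {| pm_sp := fun p => 'rV[k]_(imod_dim I p) : lmodType k;
     pm_map := fun p q _ => mulmxr (imod_mx k I p q) |}.

(* A morphism alpha : V -> W(e), where W(e)_p = W_{Lambda_e p} and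
   W(e)(p,q) = W(Lambda_e p, Lambda_e q): components plus naturality. *)
Definition shift_morph (k : fieldType) (R : realType) (L : Raction R) (e : R)
    (V W : pmod k) (a : forall p, {linear pm_sp V p -> pm_sp W (L e p)}) : Prop :=
  forall p q (h : p <= q) (h' : L e p <= L e q) v,
    a q (pm_map V h v) = pm_map W h' (a p v).

(* The identity beta(e) alpha = V_{0->2e}
   is stated componentwise, identifying V(e)(e)_p = V_{Lambda_e (Lambda_e p)}
   with V(2e)_p = V_{Lambda_{2e} p} through the action law. *)
Definition interleaved (k : fieldType) (R : realType) (L : Raction R) (e : R)
    (V W : pmod k) : Prop :=
  exists (a : forall p, {linear pm_sp V p -> pm_sp W (L e p)})
         (b : forall p, {linear pm_sp W p -> pm_sp V (L e p)}),
    [/\ shift_morph a, shift_morph b,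
        (forall p (h : p <= L e (L e p)) v, b (L e p) (a p v) = pm_map V h v)
      & (forall p (h : p <= L e (L e p)) w, a (L e p) (b p w) = pm_map W h w)].

End Defs.

From mathcomp Require Import all_boot all_order all_algebra.
From mathcomp Require Import boolp classical_sets reals.
Import Order.TTheory GRing.Theory Num.Theory.
Local Open Scope classical_set_scope.
Local Open Scope order_scope.
Set Implicit Arguments.
Unset Strict Implicit.

(* Both interleaving maps are "identity where possible": alpha_p is the identity
   k -> k when p is in I and Lambda_e p is in J, and zero otherwise.  Each
   naturality square and each composite then compares two such indicator maps,
   and the hypotheses I in Ex(J), J in Ex(I), together with the convexity of I
   and J, show that the two indicator conditions agree wherever the source
   space is nonzero. *)

Section ExtendedSets.
Variables (R : realType) (disp : Order.disp_t) (P : porderType disp).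
Variables (L : Raction P R) (e : R).
Hypothesis e_ge0 : (0 <= e)%R.

Lemma upset_nonempty (A : set P) p :
  A !=set0 -> upset A p -> exists2 a, A a & a <= p.
Proof. by move=> /set0P/eqP A0; rewrite /upset asboolF. Qed.

Lemma downset_nonempty (A : set P) p :
  A !=set0 -> downset A p -> exists2 a, A a & p <= a.
Proof. by move=> /set0P/eqP A0; rewrite /downset asboolF. Qed.

Lemma Ex_lower (A : set P) p :
  A !=set0 -> Ex L e A p -> exists2 a, A (L e a) & a <= p.
Proof.
move=> [x Ax] [+ _]; apply: upset_nonempty.
have [g _ gK] := act_bij L e_ge0.
by exists (g x); rewrite /= gK.
Qed.

Lemma Ex_upper (A : set P) p :
  A !=set0 -> Ex L e A p -> exists2 a, A a & p <= L e a.
Proof.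
move=> [x Ax] [_ +]; case/downset_nonempty; first by exists (L e x), x.
by move=> _ [a Aa <-] pa; exists a.
Qed.

Section Convex.
Variables I J : set P.
Hypotheses (I_conv : convex_set I) (J_conv : convex_set J).
Hypotheses (I_n0 : I !=set0) (J_n0 : J !=set0).
Hypotheses (IJ : I `<=` Ex L e J) (JI : J `<=` Ex L e I).

Lemma Ex_shift_below p b : I p -> J b -> L e p <= b -> J (L e p).
Proof.
move=> Ip Jb pb; have [a Ja ap] := Ex_lower J_n0 (IJ Ip).
by apply: J_conv Ja Jb _ pb; rewrite act_mono.
Qed.

Lemma Ex_shift_mono p q : I p -> J (L e q) -> p <= q -> J (L e p).
Proof. by move=> Ip Jq pq; apply: Ex_shift_below Ip Jq _; rewrite act_mono. Qed.

Lemma Ex_shift_twice p : I p -> I (L e (L e p)) -> J (L e p).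
Proof.
move=> Ip Ip2; have [b Jb pb] := Ex_upper J_n0 (IJ Ip2).
by apply: Ex_shift_below Ip Jb _; rewrite -(act_mono L _ _ e_ge0).
Qed.

Lemma Ex_unshift_mono p q : I p -> J (L e q) -> p <= q -> I q.
Proof.
move=> Ip Jq pq; have [b Ib qb] := Ex_upper I_n0 (JI Jq).
by apply: I_conv Ip Ib pq _; rewrite -(act_mono L _ _ e_ge0).
Qed.

End Convex.
End ExtendedSets.

Section IndicatorMaps.
Variables (k : fieldType) (disp : Order.disp_t) (P : porderType disp).

(* [imod_mx k I p q] is convertible to [ind_mx I I p q], so the lemmas below
   also apply to the structure maps of [interval_module k I]. *)
Definition ind_mx (I J : set P) (p q : P) : 'M[k]_(imod_dim I p, imod_dim J q) :=
  const_mx (if (p \in I) && (q \in J) then 1%R else 0%R).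

Lemma mulmx_const_mx m n (v : 'rV[k]_m) (c : k) :
  (v *m (const_mx c : 'M_(m, n)) = const_mx ((\sum_i v 0 i) * c))%R.
Proof.
apply/rowP => j; rewrite !mxE big_distrl /=.
by apply: eq_bigr => i _; rewrite !mxE.
Qed.

Lemma sum_const_row n (c : k) : (\sum_(i < n) (const_mx c : 'rV[k]_n) 0 i = c *+ n)%R.
Proof. by rewrite (eq_bigr (fun _ => c)) ?sumr_const ?card_ord // => i _; rewrite mxE. Qed.

Lemma sum_row_dim0 (b : bool) (v : 'rV[k]_(nat_of_bool b)) : ~~ b -> (\sum_i v 0 i = 0)%R.
Proof. by case: b v => v // _; rewrite big_ord0. Qed.

Lemma ind_mxM (I J K : set P) p q r (v : 'rV[k]_(imod_dim I p)) :
  (v *m ind_mx I J p q *m ind_mx J K q r =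
   if q \in J then v *m ind_mx I K p r else 0)%R.
Proof.
rewrite /ind_mx !mulmx_const_mx sum_const_row.
have [pI|pI] := boolP (p \in I); last first.
  by rewrite sum_row_dim0 // !mul0r mul0rn mul0r if_same.
rewrite /imod_dim; case: (q \in J); case: (r \in K) => /=;
  by rewrite ?(mulr1, mulr0, mulr1n, mulr0n, mul0r).
Qed.

Lemma ind_mx_eq0 (I J : set P) p q (v : 'rV[k]_(imod_dim I p)) :
  ~~ ((p \in I) && (q \in J)) -> (v *m ind_mx I J p q = 0)%R.
Proof. by move=> /negbTE pq; rewrite /ind_mx pq mulmx_const_mx mulr0. Qed.

Lemma ind_mx_guardE (I J : set P) p q (b c : bool) (v : 'rV[k]_(imod_dim I p)) :
  ((p \in I) && (q \in J) -> b = c) ->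
  (if b then v *m ind_mx I J p q else 0)%R = (if c then v *m ind_mx I J p q else 0)%R.
Proof.
have [_ -> //|npq _] := boolP ((p \in I) && (q \in J)).
by rewrite ind_mx_eq0 // !if_same.
Qed.

End IndicatorMaps.

Definition interleaving_map (k : fieldType) (R : realType) disp (P : porderType disp)
    (L : Raction P R) (e : R) (I J : set P) (p : P) :
  {linear pm_sp (interval_module k I) p -> pm_sp (interval_module k J) (L e p)} :=
  mulmxr (ind_mx k I J p (L e p)).

Section Interleaving.
Variables (k : fieldType) (R : realType) (disp : Order.disp_t) (P : porderType disp).
Variables (L : Raction P R) (e : R) (I J : set P).
Hypotheses (I_int : is_interval I) (J_int : is_interval J) (e_ge0 : (0 <= e)%R).
Hypotheses (IJ : I `<=` Ex L e J) (JI : J `<=` Ex L e I).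

Lemma interleaving_map_natural : shift_morph (interleaving_map k L e I J).
Proof.
move=> p q pq _ v /=.
rewrite [LHS]ind_mxM [RHS]ind_mxM; apply: ind_mx_guardE => /andP[/set_mem Ip /set_mem Jq].
case: I_int J_int => [I_n0 [I_conv _]] [J_n0 [J_conv _]].
rewrite (mem_set (Ex_unshift_mono e_ge0 I_conv I_n0 JI Ip Jq pq)).
by rewrite (mem_set (Ex_shift_mono e_ge0 J_conv J_n0 IJ Ip Jq pq)).
Qed.

Lemma interleaving_map_comp p (h : p <= L e (L e p)) v :
  interleaving_map k L e J I (L e p) (interleaving_map k L e I J p v) =
  pm_map (interval_module k I) h v.
Proof.
rewrite /= [LHS]ind_mxM.
apply: (ind_mx_guardE (c := true)) => /andP[/set_mem Ip /set_mem Ip2].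
case: J_int => [J_n0 [J_conv _]].
by rewrite (mem_set (Ex_shift_twice e_ge0 J_conv J_n0 IJ Ip Ip2)).
Qed.

End Interleaving.

Theorem proposition2p17 (k : fieldType) (R : realType) (disp : Order.disp_t)
    (P : porderType disp) (L : Raction P R) (I J : set P) (e : R) :
  is_interval I -> is_interval J -> (0 <= e)%R ->
  I `<=` Ex L e J -> J `<=` Ex L e I ->
  interleaved L e (interval_module k I) (interval_module k J).
Proof.
move=> I_int J_int e_ge0 IJ JI.
exists (interleaving_map k L e I J), (interleaving_map k L e J I); split.
- exact: interleaving_map_natural.
- exact: interleaving_map_natural.
- exact: interleaving_map_comp.
- exact: interleaving_map_comp.
Qed.
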